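(* Let $n$ and $s$ be integers with $\gcd(s,n)=1$ and let $\mathcal C$ be an $\mathbb F_{q^n}$-subspace of $\mathcal L_{n,q}$ of dimension $k>1$. If $\dim(\mathcal C\cap\mathcal C^{[s]})=k-1$ and $\mathcal C\cap U_1=\{0\}$, then there exists $p(x)\in\mathcal L_{n,q}$ such that \[\mathcal C=\langle p(x),p(x)^{[s]},\ldots,p(x)^{[s(k-1)]}\rangle_{\mathbb F_{q^n}}.\] If moreover $\mathcal C$ contains at least one invertible linearized polynomial, then $p(x)$ is invertible and $\mathcal C$ is equivalent to $\mathcal G_{k,s}$.
   Context: $q$ is a prime power, $[i]:=q^i$. $\mathcal L_{n,q}$ is the $\mathbb F_{q^n}$-vector space of linearized polynomials $f(x)=\sum_{i=0}^{n-1}a_ix^{[i]}$, $a_i\in\mathbb F_{q^n}$, identified with $\mathbb F_q$-linear maps of $\mathbb F_{q^n}$ (so rank, kernel and invertibility refer to these maps; $\circ$ is composition). For $f(x)=\sum_i a_ix^{[i]}$, $f(x)^{[j]}:=x^{[j]}\circ f(x)=\sum_i a_i^{[j]}x^{[(i+j)\bmod n]}$, and $\mathcal C^{[j]}=\{f^{[j]}\colon f\in\mathcal C\}$. $U_1=\{\alpha x+\alpha^{[1]}x^{[1]}+\cdots+\alpha^{[n-1]}x^{[n-1]}\colon\alpha\in\mathbb F_{q^n}\}$. $\mathcal G_{k,s}=\langle x,x^{[s]},\ldots,x^{[s(k-1)]}\rangle_{\mathbb F_{q^n}}$. Two codes $\mathcal C,\mathcal C'\subseteq\mathcal L_{n,q}$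 are equivalent if there are invertible $h,g\in\mathcal L_{n,q}$ and a field automorphism $\sigma$ (acting on coefficients) with $\{h\circ f^\sigma\circ g\colon f\in\mathcal C\}=\mathcal C'$. *)

From HB Require Import structures.
From mathcomp Require Import all_boot all_order all_algebra all_field.
Set Implicit Arguments. Unset Strict Implicit. Unset Printing Implicit Defensive.
Import GRing.Theory.
Local Open Scope ring_scope.

(* The field F_{q^n} is a finite field K with #|K| = q^n.  A linearized
   polynomial f = sum_{i<n} a_i x^[i] is represented by its coefficient row
   vector a : 'rV[K]_n, so L_{n,q} = 'rV[K]_n is an n-dimensional K-space. *)

Section LinPoly.
Variables (K : finFieldType) (q n : nat).

Definition lp_eval (a : 'rV[K]_n) (x : K) : K :=
  \sum_(i < n) a 0 i * x ^+ (q ^ i).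

Definition lp_invertible (a : 'rV[K]_n) : Prop := bijective (lp_eval a).

Definition lp_x : 'rV[K]_n := \row_(i < n) ((i : nat) == 0%N)%:R.

(* f^[j] := x^[j] o f = sum_i a_i^[j] x^[(i+j) mod n], j a natural number *)
Definition lp_frob (j : nat) (a : 'rV[K]_n) : 'rV[K]_n :=
  \row_(k < n) \sum_(i < n | ((i + j) %% n)%N == k) (a 0 i) ^+ (q ^ j).

(* f^[s] for an integer s; since x^[n] = x on F_{q^n}, only s mod n matters *)
Definition lp_frobz (s : int) (a : 'rV[K]_n) : 'rV[K]_n :=
  lp_frob `|(s %% n%:Z)%Z|%N a.

(* composition f o g of linearized polynomials, reduced modulo x^[n] - x *)
Definition lp_comp (a b : 'rV[K]_n) : 'rV[K]_n :=
  \row_(k < n) \sum_(i < n) \sum_(j < n | ((i + j) %% n)%N == k)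
     a 0 i * (b 0 j) ^+ (q ^ i).

(* C^[s] = { f^[s] : f in C }, a K-subspace (spanned by the images of a basis,
   as f |-> f^[s] is semilinear w.r.t. the Frobenius automorphism) *)
Definition frobz_space (s : int) (C : {vspace 'rV[K]_n}) : {vspace 'rV[K]_n} :=
  <<map (lp_frobz s) (vbasis C)>>%VS.

Definition inU1 (f : 'rV[K]_n) : Prop :=
  exists alpha : K, f = \row_(i < n) alpha ^+ (q ^ i).

Definition frob_span (s : int) (k : nat) (p : 'rV[K]_n) : {vspace 'rV[K]_n} :=
  <<[seq lp_frobz (s * i%:Z) p | i <- iota 0 k]>>%VS.

Definition gabidulin (k : nat) (s : int) : {vspace 'rV[K]_n} :=
  frob_span s k lp_x.

Definition lp_equivalent (C C' : {vspace 'rV[K]_n}) : Prop :=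
  exists (h g : 'rV[K]_n) (sigma : {rmorphism K -> K}),
    [/\ lp_invertible h, lp_invertible g, bijective sigma &
      forall f : 'rV[K]_n,
        f \in C' <-> exists2 c, c \in C & f = lp_comp h (lp_comp (map_mx sigma c) g)].

End LinPoly.

Arguments lp_eval {K} q {n} a x.
Arguments lp_invertible {K} q {n} a.
Arguments lp_x {K n}.
Arguments lp_frob {K} q {n} j a.
Arguments lp_frobz {K} q {n} s a.
Arguments lp_comp {K} q {n} a b.
Arguments frobz_space {K} q {n} s C.
Arguments inU1 {K} q {n} f.
Arguments frob_span {K} q {n} s k p.
Arguments gabidulin {K} q {n} k s.
Arguments lp_equivalent {K} q {n} C C'.

From HB Require Import structures.
From mathcomp Require Import all_boot all_order all_algebra all_field.
From mathcomp Require Import zify.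
Set Implicit Arguments.
Unset Strict Implicit.
Unset Printing Implicit Defensive.
Import GRing.Theory.
Local Open Scope ring_scope.

(* Write phi for f |-> f^[s]; it is injective and semilinear with respect to
   the automorphism c |-> c^(q^s) of F_{q^n}.  Since gcd(s, n) = 1, the fixed
   points of phi are exactly U_1, and for v in a phi-stable subspace S the
   traces sum_{j<n} phi^j (c v) are fixed points of phi in S; by the linear
   independence of the maps c |-> c^(q^(sj)), they all vanish only if v = 0.
   Hence C, which meets U_1 trivially, has no nonzero phi-stable subspace.
   Then the chain C_0 = C, C_{j+1} = C_j :&: phi(C_j) loses exactly one
   dimension at each step, so C_{k-1} is a line spanned by phi^{k-1}(p) with
   p, phi(p), ..., phi^{k-1}(p) all in C; a linear dependence among these
   would span a phi-stable subspace, so they form a basis of C.  If some f in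
   C is invertible, p(x) = p(y) forces f(x) = f(y), so p is invertible, and
   right composition with p^-1 maps C onto G_{k,s}. *)

Definition map_vspace {F : fieldType} {U W : vectType F} (f : U -> W)
    (S : {vspace U}) : {vspace W} :=
  <<map f (vbasis S)>>%VS.

Section SemilinearMap.
Context {F : fieldType} {U W : vectType F}.
Context {sigma : {rmorphism F -> F}} {phi : {additive U -> W}}.
Hypothesis phiZ : forall a u, phi (a *: u) = sigma a *: phi u.

Lemma memv_span_map X u : u \in <<X>>%VS -> phi u \in <<map phi X>>%VS.
Proof.
rewrite -{1}[X]in_tupleE => /coord_span ->; rewrite raddf_sum.
by apply: memv_suml => i _; rewrite phiZ memvZ // memv_span // map_f // mem_nth.
Qed.

Hypothesis sigma_bij : bijective sigma.

Lemma span_mapP X w :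
  reflect (exists2 u, u \in <<X>>%VS & w = phi u) (w \in <<map phi X>>%VS).
Proof.
apply: (iffP idP) => [|[u uX ->]]; last exact: memv_span_map.
have [sigma' _ sigmaK] := sigma_bij.
rewrite -[map phi X]/(val (map_tuple phi (in_tuple X))) => /coord_span ->.
exists (\sum_i sigma' (coord (map_tuple phi (in_tuple X)) i w) *: X`_i).
  by apply: memv_suml => i _; rewrite memvZ // memv_span // mem_nth.
rewrite raddf_sum; apply: eq_bigr => i _.
by rewrite phiZ sigmaK /= (nth_map 0).
Qed.

Hypothesis phi_inj : injective phi.

Lemma free_map X : free X -> free (map phi X).
Proof.
rewrite -[X]in_tupleE -[map phi _]/(val (map_tuple phi (in_tuple X))).
move=> /freeP freeX; apply/freeP => c c0 i.
have [sigma' _ sigmaK] := sigma_bij.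
have /freeX/(_ i) : \sum_j sigma' (c j) *: X`_j = 0.
  apply: phi_inj; rewrite raddf0 raddf_sum -[RHS]c0; apply: eq_bigr => j _.
  by rewrite phiZ sigmaK /= (nth_map 0).
by move=> ci0; rewrite -[c i]sigmaK ci0 rmorph0.
Qed.

Lemma mem_map_vspace (S : {vspace U}) u : u \in S -> phi u \in map_vspace phi S.
Proof. by move=> uS; apply: memv_span_map; rewrite (span_basis (vbasisP S)). Qed.

Lemma map_vspaceP (S : {vspace U}) w :
  reflect (exists2 u, u \in S & w = phi u) (w \in map_vspace phi S).
Proof. by rewrite -{1}(span_basis (vbasisP S)); apply: span_mapP. Qed.

Lemma map_vspaceS (S T : {vspace U}) :
  (S <= T)%VS -> (map_vspace phi S <= map_vspace phi T)%VS.
Proof.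
move=> /subvP sST; apply/span_subvP => _ /mapP [u uS ->].
exact/mem_map_vspace/sST/vbasis_mem.
Qed.

Lemma dim_map_vspace (S : {vspace U}) : \dim (map_vspace phi S) = \dim S.
Proof.
by rewrite /map_vspace (eqP (free_map (basis_free (vbasisP S)))) size_map size_tuple.
Qed.

End SemilinearMap.

Section SemilinearOrbit.
Context {F : fieldType} {V : vectType F}.
Context {sigma : {rmorphism F -> F}} {phi : {additive V -> V}}.
Hypotheses (phiZ : forall a v, phi (a *: v) = sigma a *: phi v)
  (sigma_bij : bijective sigma) (phi_inj : injective phi).
Variables (C : {vspace V}) (k : nat).
Hypotheses (dimC : \dim C = k) (k_gt0 : (0 < k)%N)
  (dim_cap : \dim (C :&: map_vspace phi C)%VS = k.-1)
  (no_stable : forall S : {vspace V},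
     (S <= C)%VS -> {in S, forall v, phi v \in S} -> S = 0%VS).

Fixpoint chain j : {vspace V} :=
  if j is j'.+1 then (chain j' :&: map_vspace phi (chain j'))%VS else C.

Lemma chain_sub j : (chain j.+1 <= chain j)%VS.
Proof. exact: capvSl. Qed.

Lemma chain_subC j : (chain j <= C)%VS.
Proof. by elim: j => //= j; apply: subv_trans (capvSl _ _). Qed.

Lemma chain_iter j v i :
  v \in chain j -> (i <= j)%N -> exists2 u, u \in C & v = iter i phi u.
Proof.
elim: j i v => [|j IHj] i v; first by rewrite leqn0 => vC /eqP ->; exists v.
move=> /memv_capP [vB /(map_vspaceP phiZ sigma_bij) [w wB vE]].
rewrite leq_eqVlt ltnS => /predU1P [->|]; last exact: IHj.
by have [u uC wE] := IHj j w wB (leqnn j); exists u; rewrite // vE wE.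
Qed.

Let dim_phi := dim_map_vspace phiZ sigma_bij phi_inj.

Lemma sub_map_vspace_eq0 (D : {vspace V}) :
  (D <= C)%VS -> (D <= map_vspace phi D)%VS -> D = 0%VS.
Proof.
move=> sDC sDphiD; apply: no_stable => // v vD.
have -> : D = map_vspace phi D by apply/eqP; rewrite eqEdim sDphiD dim_phi leqnn.
exact: mem_map_vspace.
Qed.

(* [chain j.+1 + phi (chain j.+1)] lies in [phi (chain j)], which bounds the
   dimension of the next intersection from below. *)
Lemma dim_chainSS j : (j.+2 < k)%N ->
  \dim (chain j) = (k - j)%N -> \dim (chain j.+1) = (k - j.+1)%N ->
  \dim (chain j.+2) = (k - j.+2)%N.
Proof.
move=> ltjk dimBj dimBj1; set D := chain j.+1.
change (chain j.+2) with (D :&: map_vspace phi D)%VS.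
have dim_sum : (\dim (D + map_vspace phi D) <= k - j)%N.
  rewrite -dimBj -(dim_phi (chain j)); apply: dimvS.
  by rewrite subv_add capvSr (map_vspaceS phiZ) ?chain_sub.
have dim_cap_lt : (\dim (D :&: map_vspace phi D) < \dim D)%N.
  have D_neq0 : D != 0%VS by rewrite -dimv_eq0 dimBj1; lia.
  rewrite ltn_neqAle dimvS ?capvSl // andbT; apply: contra_neq D_neq0 => dim_eq.
  have /eqP capD : (D :&: map_vspace phi D == D)%VS.
    by rewrite eqEdim capvSl dim_eq leqnn.
  by apply: sub_map_vspace_eq0; rewrite ?chain_subC // -{1}capD capvSr.
have := dimv_sum_cap D (map_vspace phi D); rewrite dim_phi.
move: dim_sum dim_cap_lt; rewrite dimBj1; lia.
Qed.

Lemma dim_chain j : (j < k)%N -> \dim (chain j) = (k - j)%N.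
Proof.
suff dim2 i : (i.+1 < k)%N ->
    \dim (chain i) = (k - i)%N /\ \dim (chain i.+1) = (k - i.+1)%N.
  by case: j => [|j] ltjk; [rewrite dimC subn0 | case: (dim2 j ltjk)].
elim: i => [|i IHi] ltik; first by rewrite /= dimC dim_cap subn0 subn1.
by have [dimBi dimBi1] := IHi (ltnW ltik); split; last exact: dim_chainSS.
Qed.

(* If [iter j phi P] lay in the span of the earlier iterates, that span would
   be phi-stable. *)
Lemma free_traject P j : P != 0 ->
  (forall i, (i < j)%N -> iter i phi P \in C) -> free (traject phi P j).
Proof.
move=> P0; elim: j => [|j IHj] inC; first exact: nil_free.
have trajC i : (i < j)%N -> iter i phi P \in C by move=> ltij; apply/inC/ltnW.
rewrite trajectSr (perm_free (permEl (perm_rcons _ _))) free_cons IHj // andbT.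
apply: contra P0 => iterjP; set T := traject phi P j in iterjP.
have T0 : <<T>>%VS = 0%VS.
  apply: no_stable => [|v /(memv_span_map phiZ)].
    by apply/span_subvP => w /trajectP [i ltij ->]; apply: trajC.
  apply/subvP; apply/span_subvP => w /mapP [w' /trajectP [i ltij ->] ->].
  rewrite -iterS; case: (ltngtP i.+1 j) => [ltSij | gtSij | -> //]; last by lia.
  by apply/memv_span/trajectP; exists i.+1.
suff : P \in <<T>>%VS by rewrite T0 memv0.
have [j0 | j_gt0] := posnP j; first by move: iterjP; rewrite j0.
by apply/memv_span/trajectP; exists 0%N.
Qed.

Lemma exists_span_traject : exists P, C = <<traject phi P k>>%VS.
Proof.
have vB := memv_pick (chain k.-1).
have v0 : vpick (chain k.-1) != 0.
  by rewrite vpick0 -dimv_eq0 dim_chain ?subn_eq0 -?ltnNge; lia.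
have [P PC vP] := chain_iter vB (leqnn k.-1).
have iter_inj i : injective (iter i phi) by elim: i => // i IHi u w /= /phi_inj/IHi.
have inC i : (i < k)%N -> iter i phi P \in C.
  move=> ltik; have [u uC vu] := chain_iter vB (leq_subr i k.-1).
  suff -> : iter i phi P = u by [].
  by apply: (iter_inj (k.-1 - i)%N); rewrite -iterD subnK -?vP -?vu //; lia.
have P0 : P != 0.
  apply: contraNneq v0 => P0; rewrite vP P0.
  by elim: k.-1 => //= i /eqP ->; rewrite raddf0.
exists P; apply/eqP; rewrite eq_sym eqEdim dimC.
rewrite (eqP (free_traject P0 inC)) size_traject leqnn andbT.
by apply/span_subvP => w /trajectP [i ltik ->]; apply: inC.
Qed.

End SemilinearOrbit.

Lemma coprime_modinv a n : coprime a n -> exists u, (a * u = 1 %[mod n])%N.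
Proof.
have [-> | a_gt0] := posnP a.
  by rewrite /coprime gcd0n => /eqP ->; exists 0%N; rewrite !modn1.
case/(coprimeP _ a_gt0) => [[u v] /= uv1]; exists u.
have -> : (a * u = v * n + 1)%N by lia.
exact: modnMDl.
Qed.

Lemma sumr_shift (V : nmodType) N (f : nat -> V) :
  f N = f 0%N -> \sum_(j < N) f j.+1 = \sum_(j < N) f j.
Proof.
case: N => [|N] fN; first by rewrite !big_ord0.
by rewrite big_ord_recr big_ord_recl /= fN addrC.
Qed.

Lemma coprime_absz_modz (s : int) n :
  coprime `|s|%N n -> coprime `|(s %% n%:Z)%Z|%N n.
Proof.
move=> cop_sn; have : coprimez (s %% n%:Z)%Z n%:Z by rewrite /coprimez gcdz_modl.
by rewrite coprimezE absz_nat.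
Qed.

Section LinearizedPolynomials.
Variables (K : finFieldType) (p m q n : nat).
Hypotheses (p_prime : prime p) (m_gt0 : (0 < m)%N) (qE : q = (p ^ m)%N)
  (n_gt0 : (0 < n)%N) (cardK : #|K| = (q ^ n)%N).
Local Notation lpoly := 'rV[K]_n.

Lemma q_gt1 : (1 < q)%N.
Proof. by rewrite qE -(expn0 p) ltn_exp2l // prime_gt1. Qed.

Lemma pchar_K : p \in [pchar K].
Proof. by apply: (@card_finPcharP _ p (m * n)); rewrite // cardK qE expnM. Qed.

Definition frob_pow j (x : K) : K := x ^+ (q ^ j).

Lemma frob_pow_is_nmod_morphism j : nmod_morphism (frob_pow j).
Proof.
split=> [|x y]; first by rewrite /frob_pow expr0n expn_eq0 gtn_eqF ?(ltnW q_gt1).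
by rewrite /frob_pow exprDn_pchar // qE -expnM pnatX (pnatE _ p_prime) pchar_K.
Qed.

Lemma frob_pow_is_monoid_morphism j : monoid_morphism (frob_pow j).
Proof. by split=> [|x y]; rewrite /frob_pow ?expr1n ?exprMn. Qed.

HB.instance Definition _ j := GRing.isNmodMorphism.Build K K (frob_pow j)
  (frob_pow_is_nmod_morphism j).
HB.instance Definition _ j := GRing.isMonoidMorphism.Build K K (frob_pow j)
  (frob_pow_is_monoid_morphism j).

Lemma frob_pow_bij j : bijective (frob_pow j).
Proof. exact/injF_bij/fmorph_inj. Qed.

Lemma exprq_sum j I (r : seq I) (P : pred I) (F : I -> K) :
  (\sum_(i <- r | P i) F i) ^+ (q ^ j) = \sum_(i <- r | P i) F i ^+ (q ^ j).
Proof. exact: (rmorph_sum (frob_pow j) r P F). Qed.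

Lemma exprq_nmul t (x : K) : x ^+ (q ^ (n * t)) = x.
Proof.
elim: t => [|t IHt]; first by rewrite muln0 expr1.
by rewrite mulnS expnD exprM -cardK expf_card.
Qed.

Lemma exprq_mod i (x : K) : x ^+ (q ^ i) = x ^+ (q ^ (i %% n)).
Proof. by rewrite {1}(divn_eq i n) expnD exprM mulnC exprq_nmul. Qed.

Lemma exprq_eqmod i j (x : K) : i = j %[mod n] -> x ^+ (q ^ i) = x ^+ (q ^ j).
Proof. by move=> eq_ij; rewrite exprq_mod eq_ij -exprq_mod. Qed.

(* A vanishing combination is a polynomial of degree < q^n = #|K| with #|K|
   roots. *)
Lemma frob_pow_indep (c : 'I_n -> K) (e : 'I_n -> 'I_n) : injective e ->
  (forall x, \sum_i c i * x ^+ (q ^ e i) = 0) -> forall i, c i = 0.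
Proof.
move=> e_inj c0 i.
pose P : {poly K} := \sum_j c j *: 'X^(q ^ e j).
have P0 : P = 0.
  apply: (@roots_geq_poly_eq0 _ P (enum K)); last 2 first.
  - exact: enum_uniq.
  - rewrite -cardE cardK; apply: leq_trans (size_sum _ _ _) _.
    apply/bigmax_leqP => j _; apply: leq_trans (size_scale_leq _ _) _.
    by rewrite size_polyXn ltn_exp2l ?q_gt1.
  apply/allP => x _; apply/eqP; rewrite /P horner_sum -[RHS](c0 x).
  by apply: eq_bigr => j _; rewrite hornerZ hornerXn.
have := congr1 (fun P : {poly K} => P`_(q ^ e i)) P0.
rewrite /P coef_sum coef0 (bigD1 i) //= coefZ coefXn eqxx mulr1 big1 ?addr0 //.
move=> j /negbTE ji; rewrite coefZ coefXn eqn_exp2l ?q_gt1 //.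
by rewrite val_eqE (inj_eq e_inj) eq_sym ji mulr0.
Qed.

Lemma lp_evalD (a b : lpoly) x : lp_eval q (a + b) x = lp_eval q a x + lp_eval q b x.
Proof. by rewrite /lp_eval -big_split; apply: eq_bigr => i _; rewrite mxE mulrDl. Qed.

Lemma lp_evalZ c (a : lpoly) x : lp_eval q (c *: a) x = c * lp_eval q a x.
Proof. by rewrite /lp_eval mulr_sumr; apply: eq_bigr => i _; rewrite mxE mulrA. Qed.

Lemma lp_eval0 x : lp_eval q (0 : lpoly) x = 0.
Proof. by rewrite /lp_eval big1 // => i _; rewrite mxE mul0r. Qed.

Lemma lp_eval_sum I (r : seq I) (P : pred I) (G : I -> lpoly) x :
  lp_eval q (\sum_(i <- r | P i) G i) x = \sum_(i <- r | P i) lp_eval q (G i) x.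
Proof.
exact: (big_morph (lp_eval q ^~ x) (fun a b => lp_evalD a b x) (lp_eval0 x)).
Qed.

Lemma lp_eval_inj (a b : lpoly) : lp_eval q a =1 lp_eval q b -> a = b.
Proof.
move=> eq_ab; apply/rowP => i; apply/eqP; rewrite -subr_eq0; apply/eqP.
apply: (@frob_pow_indep (fun j => a 0 j - b 0 j) id) => // x.
rewrite -[RHS](subrr (lp_eval q a x)) {2}eq_ab /lp_eval -sumrB.
by apply: eq_bigr => j _; rewrite mulrBl.
Qed.

Lemma sum_fiber_mod (e : 'I_n -> nat) (F : 'I_n -> K) (y : nat -> K) :
  \sum_(k < n) (\sum_(i < n | (e i %% n)%N == k) F i) * y k
  = \sum_(i < n) F i * y (e i %% n)%N.
Proof.
under eq_bigr do rewrite mulr_suml.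
rewrite (exchange_big_dep xpredT) //=; apply: eq_bigr => i _.
by rewrite (big_pred1 (Ordinal (ltn_pmod (e i) n_gt0))).
Qed.

Lemma lp_eval_frob j (a : lpoly) x :
  lp_eval q (lp_frob q j a) x = lp_eval q a x ^+ (q ^ j).
Proof.
rewrite /lp_eval /lp_frob; under eq_bigr do rewrite mxE.
rewrite (sum_fiber_mod (fun i => i + j)%N (fun i => a 0 i ^+ (q ^ j))
  (fun k => x ^+ (q ^ k))).
rewrite exprq_sum; apply: eq_bigr => i _.
by rewrite exprMn -exprM -expnD -exprq_mod.
Qed.

Lemma lp_eval_comp (a b : lpoly) x :
  lp_eval q (lp_comp q a b) x = lp_eval q a (lp_eval q b x).
Proof.
rewrite /lp_eval /lp_comp; under eq_bigr do rewrite mxE mulr_suml.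
rewrite exchange_big /=; apply: eq_bigr => i _.
rewrite (sum_fiber_mod (fun j => i + j)%N (fun j => a 0 i * b 0 j ^+ (q ^ i))
  (fun k => x ^+ (q ^ k))).
rewrite exprq_sum mulr_sumr; apply: eq_bigr => j _.
by rewrite exprMn -exprM -expnD -exprq_mod addnC mulrA.
Qed.

Lemma lp_eval_x x : lp_eval q (lp_x : lpoly) x = x.
Proof.
rewrite /lp_eval (bigD1 (Ordinal n_gt0)) //= mxE eqxx mul1r expr1.
by rewrite big1 ?addr0 // => i i0; rewrite mxE (negbTE (i0 : (i : nat) != 0%N)) mul0r.
Qed.

Lemma lp_frob_is_nmod_morphism j : nmod_morphism (@lp_frob K q n j).
Proof.
split=> [|a b]; apply: lp_eval_inj => x; rewrite lp_eval_frob.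
  by rewrite !lp_eval0; exact: rmorph0 (frob_pow j).
rewrite !lp_evalD !lp_eval_frob.
exact: (rmorphD (frob_pow j) (lp_eval q a x) (lp_eval q b x)).
Qed.

HB.instance Definition _ j := GRing.isNmodMorphism.Build lpoly lpoly
  (lp_frob q j) (lp_frob_is_nmod_morphism j).
HB.instance Definition _ (s : int) := GRing.isNmodMorphism.Build lpoly lpoly
  (lp_frobz q s) (lp_frob_is_nmod_morphism _).

Lemma lp_frobZ j c (a : lpoly) :
  lp_frob q j (c *: a) = frob_pow j c *: lp_frob q j a.
Proof. by apply: lp_eval_inj => x; rewrite lp_evalZ !lp_eval_frob lp_evalZ exprMn. Qed.

Lemma lp_frobD i j (a : lpoly) : lp_frob q i (lp_frob q j a) = lp_frob q (j + i) a.
Proof. by apply: lp_eval_inj => x; rewrite !lp_eval_frob -exprM -expnD. Qed.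

Lemma lp_frob_eqmod i j (a : lpoly) : i = j %[mod n] -> lp_frob q i a = lp_frob q j a.
Proof.
by move=> eq_ij; apply: lp_eval_inj => x; rewrite !lp_eval_frob (exprq_eqmod _ eq_ij).
Qed.

Lemma lp_frob0 (a : lpoly) : lp_frob q 0 a = a.
Proof. by apply: lp_eval_inj => x; rewrite lp_eval_frob expr1. Qed.

Lemma lp_frob_iter j i (a : lpoly) : iter i (lp_frob q j) a = lp_frob q (j * i) a.
Proof.
elim: i => [|i IHi]; first by rewrite muln0 lp_frob0.
by rewrite iterS IHi lp_frobD mulnS addnC.
Qed.

Lemma lp_frob_inj j : injective (@lp_frob K q n j).
Proof.
apply: (can_inj (g := lp_frob q (j * n.-1))) => a.
rewrite lp_frobD addnC -mulnSr prednK // (@lp_frob_eqmod _ 0) ?lp_frob0 //.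
by rewrite modnMl mod0n.
Qed.

Lemma lp_frob_coef j (w : lpoly) (i : 'I_n) :
  (i = j %[mod n])%N -> lp_frob q j w 0 i = w 0 (Ordinal n_gt0) ^+ (q ^ j).
Proof.
move=> eq_ij; rewrite mxE (big_pred1 (Ordinal n_gt0)) // => i' /=.
rewrite -val_eqE /= -(modn_small (ltn_ord i)) eq_ij -{2}(add0n j) eqn_modDr.
by rewrite mod0n modn_small.
Qed.

Lemma lp_frobz_iter (s : int) i (a : lpoly) :
  lp_frobz q (s * i%:Z) a = iter i (lp_frobz q s) a.
Proof.
rewrite /lp_frobz lp_frob_iter; apply: lp_frob_eqmod.
have n0 : n%:Z != 0 by rewrite eqz_nat -lt0n.
suff -> : ((s * i%:Z) %% n%:Z)%Z = ((`|(s %% n%:Z)%Z| * i)%N %% n)%N :> int.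
  by rewrite absz_nat modn_mod.
by rewrite -modz_nat PoszM gez0_abs ?modzMml // modz_ge0.
Qed.

Lemma frob_span_traject (s : int) k (a : lpoly) :
  frob_span q s k a = <<traject (lp_frobz q s) a k>>%VS.
Proof.
congr <<_>>%VS; apply: (@eq_from_nth _ a) => [|i].
  by rewrite size_map size_iota size_traject.
rewrite size_map size_iota => ltik.
by rewrite (nth_map 0%N) ?size_iota // nth_iota // nth_traject // lp_frobz_iter.
Qed.

Lemma lp_frob_fixed_inU1 s (w : lpoly) :
  coprime s n -> lp_frob q s w = w -> inU1 q w.
Proof.
move=> cop_sn fix_w; have [t st1] := coprime_modinv cop_sn.
have fix_all i : lp_frob q i w = w.
  rewrite -(@lp_frob_eqmod (s * (t * i))); last first.
    by rewrite mulnA -modnMml st1 modnMml mul1n.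
  by rewrite -lp_frob_iter; elim: (t * i)%N => //= r ->.
exists (w 0 (Ordinal n_gt0)); apply/rowP => i; rewrite mxE.
by rewrite -[LHS](congr1 (fun a : lpoly => a 0 i) (fix_all i)) lp_frob_coef.
Qed.

Definition frob_trace s (a : lpoly) : lpoly := \sum_(j < n) lp_frob q (s * j) a.

Lemma frob_trace_fixed s a : lp_frob q s (frob_trace s a) = frob_trace s a.
Proof.
rewrite /frob_trace raddf_sum /=; under eq_bigr do rewrite lp_frobD -mulnSr.
apply: (@sumr_shift _ n (fun j => lp_frob q (s * j) a)).
by apply: lp_frob_eqmod; rewrite modnMl muln0 mod0n.
Qed.

(* The coordinates of [frob_trace s (c *: v)] are q-polynomials in [c] whose
   coefficient of [c] is the corresponding coordinate of [v]. *)
Lemma frob_trace_eq0 s (v : lpoly) :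
  coprime s n -> (forall c, frob_trace s (c *: v) = 0) -> v = 0.
Proof.
move=> cop_sn tr0; apply/rowP => t; rewrite mxE.
have [u su1] := coprime_modinv cop_sn.
pose e (j : 'I_n) : 'I_n := Ordinal (ltn_pmod (s * j) n_gt0).
have eK (j : 'I_n) : ((u * e j) %% n)%N = j.
  rewrite /= modnMmr mulnA [(u * s)%N]mulnC -modnMml su1 modnMml mul1n.
  exact: modn_small.
have e_inj : injective e by move=> j1 j2 e12; apply: val_inj; rewrite /= -eK e12 eK.
have := @frob_pow_indep (fun j => lp_frob q (s * j) v 0 t) e e_inj _ (Ordinal n_gt0).
rewrite /= muln0 lp_frob0; apply=> x.
have := congr1 (fun a : lpoly => a 0 t) (tr0 x).
rewrite /frob_trace summxE mxE => tr0x; rewrite -[RHS]tr0x.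
by apply: eq_bigr => j _; rewrite lp_frobZ !mxE mulrC -exprq_mod.
Qed.

Lemma frob_stable_eq0 s (S : {vspace lpoly}) : coprime s n ->
  {in S, forall v, lp_frob q s v \in S} ->
  (forall f, f \in S -> inU1 q f -> f = 0) -> S = 0%VS.
Proof.
move=> cop_sn stabS U1S; apply/vspaceP => v; rewrite memv0.
apply/idP/eqP => [vS | ->]; last exact: mem0v.
apply: (frob_trace_eq0 cop_sn) => c.
apply: U1S; last exact: lp_frob_fixed_inU1 cop_sn (frob_trace_fixed _ _).
apply: memv_suml => j _; rewrite -lp_frob_iter.
by elim: (j : nat) => [|i IHi]; [rewrite memvZ | apply: stabS].
Qed.

Lemma lp_comp_x (a : lpoly) : lp_comp q lp_x a = a.
Proof. by apply: lp_eval_inj => x; rewrite lp_eval_comp lp_eval_x. Qed.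

Lemma lp_comp_frob j (a b : lpoly) :
  lp_comp q (lp_frob q j a) b = lp_frob q j (lp_comp q a b).
Proof. by apply: lp_eval_inj => x; rewrite lp_eval_comp !lp_eval_frob lp_eval_comp. Qed.

Definition lp_compr (g a : lpoly) : lpoly := lp_comp q a g.

Lemma lp_compr_is_nmod_morphism g : nmod_morphism (lp_compr g).
Proof.
split=> [|a b]; apply: lp_eval_inj => x; rewrite /lp_compr lp_eval_comp.
  by rewrite !lp_eval0.
by rewrite !lp_evalD !lp_eval_comp.
Qed.

HB.instance Definition _ g := GRing.isNmodMorphism.Build lpoly lpoly
  (lp_compr g) (lp_compr_is_nmod_morphism g).

Lemma lp_comprZ g c (a : lpoly) : lp_compr g (c *: a) = c *: lp_compr g a.
Proof.
by apply: lp_eval_inj => x; rewrite /lp_compr lp_eval_comp !lp_evalZ lp_eval_comp.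
Qed.

Lemma lp_eval_span (X : seq lpoly) f x y : f \in <<X>>%VS ->
  {in X, forall h, lp_eval q h x = lp_eval q h y} -> lp_eval q f x = lp_eval q f y.
Proof.
rewrite -{1}[X]in_tupleE => /coord_span -> eqX; rewrite !lp_eval_sum.
by apply: eq_bigr => i _; rewrite !lp_evalZ eqX // mem_nth.
Qed.

Lemma lp_invertible_traject (s : int) k (P f : lpoly) :
  f \in <<traject (lp_frobz q s) P k>>%VS -> lp_invertible q f -> lp_invertible q P.
Proof.
move=> fX /bij_inj f_inj; apply: injF_bij => x y Pxy; apply: f_inj.
apply: (lp_eval_span fX) => _ /trajectP [i _ ->].
by rewrite /lp_frobz lp_frob_iter !lp_eval_frob Pxy.
Qed.

Lemma lp_comp_rinv (P : lpoly) :
  lp_invertible q P -> exists2 g, lp_invertible q g & lp_comp q P g = lp_x.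
Proof.
move=> /bij_inj P_inj.
have compP_inj : injective (lp_comp q P).
  move=> a b eq_ab; apply: lp_eval_inj => x; apply: P_inj.
  by rewrite -!lp_eval_comp eq_ab.
have [g' _ g'K] := injF_bij compP_inj; exists (g' lp_x); last exact: g'K.
apply: injF_bij => x y eq_xy.
by rewrite -[x]lp_eval_x -[y]lp_eval_x -(g'K lp_x) !lp_eval_comp eq_xy.
Qed.

Lemma map_lp_compr_traject (s : int) k g (a : lpoly) :
  map (lp_compr g) (traject (lp_frobz q s) a k)
  = traject (lp_frobz q s) (lp_comp q a g) k.
Proof. by elim: k a => //= k IHk a; rewrite IHk /lp_compr lp_comp_frob. Qed.

Lemma exists_span_trajectuivalent (s : int) k (P : lpoly) : lp_invertible q P ->
  lp_equivalent q <<traject (lp_frobz q s) P k>>%VS (gabidulin q k s).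
Proof.
move=> /lp_comp_rinv [g g_inv Pg].
have id_bij : bijective (idfun : K -> K) by exists idfun.
exists lp_x, g, idfun; split=> // [|f]; first by exists idfun => x; rewrite lp_eval_x.
have lp_comprP := span_mapP (sigma := idfun) (lp_comprZ g) id_bij.
rewrite /gabidulin frob_span_traject -[lp_x in traject _ lp_x]Pg -map_lp_compr_traject.
split=> [/lp_comprP [c cX ->] | [c cX ->]].
  by exists c; rewrite // map_mx_id // lp_comp_x.
by rewrite map_mx_id // lp_comp_x; apply/lp_comprP; exists c.
Qed.

Lemma code_eq_frob_span (s : int) (k : nat) (C : {vspace lpoly}) :
  coprime `|s|%N n -> \dim C = k -> (0 < k)%N ->
  \dim (C :&: frobz_space q s C)%VS = k.-1 ->
  (forall f, f \in C -> inU1 q f -> f = 0) ->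
  exists P : lpoly,
    C = frob_span q s k P /\
    ((exists2 f, f \in C & lp_invertible q f) ->
       lp_invertible q P /\ lp_equivalent q C (gabidulin q k s)).
Proof.
move=> /coprime_absz_modz cop_sn dimC k_gt0 dim_cap U1C.
have phiZ c (a : lpoly) :
  lp_frobz q s (c *: a) = frob_pow `|(s %% n%:Z)%Z| c *: lp_frobz q s a.
  exact: lp_frobZ.
have no_stable S : (S <= C)%VS -> {in S, forall v, lp_frobz q s v \in S} -> S = 0%VS.
  by move=> /subvP sSC stabS; apply: frob_stable_eq0 cop_sn stabS _ => f /sSC /U1C.
have [P CE] := exists_span_traject phiZ (frob_pow_bij _) (@lp_frob_inj _)
  dimC k_gt0 dim_cap no_stable.
exists P; rewrite frob_span_traject; split=> // -[f fC f_inv].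
have P_inv : lp_invertible q P.
  by apply: lp_invertible_traject f_inv; rewrite CE in fC; exact: fC.
by split=> //; rewrite CE; apply: exists_span_trajectuivalent.
Qed.

End LinearizedPolynomials.

Theorem lemma3p5 (K : finFieldType) (p m q n : nat) (s : int) (k : nat)
    (C : {vspace 'rV[K]_n}) :
  prime p -> (0 < m)%N -> q = (p ^ m)%N -> (0 < n)%N -> #|K| = (q ^ n)%N ->
  coprime `|s|%N n ->
  \dim C = k -> (1 < k)%N ->
  \dim (C :&: frobz_space q s C)%VS = k.-1 ->
  (forall f, f \in C -> inU1 q f -> f = 0) ->
  exists P : 'rV[K]_n,
    C = frob_span q s k P /\
    ((exists2 f, f \in C & lp_invertible q f) ->
       lp_invertible q P /\ lp_equivalent q C (gabidulin q k s)).
Proof.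
move=> p_prime m_gt0 qE n_gt0 cardK cop_sn dimC k_gt1.
exact: (code_eq_frob_span p_prime m_gt0 qE n_gt0 cardK cop_sn dimC (ltnW k_gt1)).
Qed.
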